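(* Let $V$ be a real vector space of dimension $m=p+q\ge3$ with a non-degenerate symmetric inner product of arbitrary signature $(p,q)$, and let $\nabla R$ be a covariant derivative algebraic curvature tensor on $V$. If the eigenvalues of $\mathcal{S}_{\nabla R}(\cdot)$ are constant on $S^+(V)$ and on $S^-(V)$, then $\mathcal{S}_{\nabla R}(x)$ is nilpotent for every complex null vector $x\in\mathcal{N}$.
   Context: A covariant derivative algebraic curvature tensor is $\nabla R\in\otimes^5V^*$ satisfying $\nabla R(a,b,c,d;e)=-\nabla R(b,a,c,d;e)=\nabla R(c,d,a,b;e)$, $\nabla R(a,b,c,d;e)+\nabla R(a,c,d,b;e)+\nabla R(a,d,b,c;e)=0$, and $\nabla R(a,b,c,d;e)+\nabla R(a,b,d,e;c)+\nabla R(a,b,e,c;d)=0$. The Szab\'o operator $\mathcal{S}_{\nabla R}(x)$ is the linear map of $V$ defined by $(\mathcal{S}_{\nabla R}(x)y,w)=\nabla R(y,x,x,w;x)$. $S^\pm(V)=\{v\in V:(v,v)=\pm1\}$ are the pseudo-spheres of unit spacelike and timelike vectors. Everything is extended complex-multilinearly to $V_{\mathbb{C}}=V\otimes\mathbb{C}$; $\mathcal{N}=\{v\in V_{\mathbb{C}}:(v,v)=0\}$. A linear map $A$ is nilpotent if $A^m=0$, equivalently $\operatorname{trace}(A^i)=0$ for $1\le i\le m$. *)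

From mathcomp Require Import all_boot all_algebra reals complex.
Set Implicit Arguments. Unset Strict Implicit. Unset Printing Implicit Defensive.
Import GRing.Theory Num.Theory.
Local Open Scope ring_scope.

(* V = K^m as row vectors 'rV[K]_m ; an element of (x)^5 V^* is given by its
   components T a b c d e = T(e_a,e_b,e_c,e_d;e_e) in the standard basis. *)
Definition tensor5 (K : Type) (m : nat) := 'I_m -> 'I_m -> 'I_m -> 'I_m -> 'I_m -> K.

Definition tensor5_eval (K : comNzRingType) (m : nat) (T : tensor5 K m)
  (a b c d e : 'rV[K]_m) : K :=
  \sum_(i < m) \sum_(j < m) \sum_(k < m) \sum_(l < m) \sum_(n < m)
     T i j k l n * a 0 i * b 0 j * c 0 k * d 0 l * e 0 n.

Definition is_cov_deriv_act (K : comNzRingType) (m : nat) (T : tensor5 K m) : Prop :=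
  (forall a b c d e, T a b c d e = - T b a c d e) /\
  (forall a b c d e, T a b c d e = T c d a b e) /\
  (forall a b c d e, T a b c d e + T a c d b e + T a d b c e = 0) /\
  (forall a b c d e, T a b c d e + T a b d e c + T a b e c d = 0).

Definition ip (K : comNzRingType) (m : nat) (G : 'M[K]_m) (u v : 'rV[K]_m) : K :=
  (u *m G *m v^T) 0 0.

Definition szabo_bil (K : comNzRingType) (m : nat) (T : tensor5 K m) (x : 'rV[K]_m)
  : 'M[K]_m :=
  \matrix_(a < m, b < m) tensor5_eval T (delta_mx 0 a) x x (delta_mx 0 b) x.

(* Szabo operator S(x) acting on row vectors (y |-> y *m S(x)), characterised by
   (S(x) y, w) = nablaR(y,x,x,w;x), i.e. S(x) *m G = szabo_bil T x. *)
Definition szabo (K : fieldType) (m : nat) (G : 'M[K]_m) (T : tensor5 K m)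
  (x : 'rV[K]_m) : 'M[K]_m :=
  szabo_bil T x *m invmx G.

Definition cplx_mx (R : rcfType) (m n : nat) (A : 'M[R]_(m, n)) : 'M[R[i]]_(m, n) :=
  map_mx (fun r => r%:C%C) A.
Definition cplx_tensor (R : rcfType) (m : nat) (T : tensor5 R m) : tensor5 R[i] m :=
  fun a b c d e => (T a b c d e)%:C%C.

Definition eigenvalues (R : rcfType) (m : nat) (A : 'M[R]_m) : R[i] -> bool :=
  fun z => root (char_poly (cplx_mx A)) z.

Definition nilpotent_mx (K : pzRingType) (m : nat) (A : 'M[K]_m) : Prop :=
  exists k : nat, A ^+ k = 0.

From mathcomp Require Import all_boot all_algebra reals complex.
From mathcomp Require Import order boolp ring lra.
Set Implicit Arguments. Unset Strict Implicit. Unset Printing Implicit Defensive.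
Import Order.TTheory GRing.Theory Num.Theory.
Local Open Scope ring_scope.

(* Fix a unit vector x0 with (x0, x0) = e = +-1 and let s be the eigenvalues of
   S(x0).  Since S is cubic in x, for real y with e (y, y) > 0 the operator S(y)
   is a multiple of S(y0) for a unit vector y0 with (y0, y0) = e, and by
   Cayley-Hamilton the matrix
     Phi(x) = (prod_(r in s) (S(x)^2 - e (x, x)^3 r^2))^m
   vanishes at y.  Phi is polynomial in x and {e (y, y) > 0} contains a half-line
   of every real line through x0, so Phi vanishes on V and then on V_C.  At a
   null vector Phi(x) is a power of S(x). *)

Definition map_tensor5 (K L : Type) (f : K -> L) n (T : tensor5 K n) :
  tensor5 L n := fun a b c d e => f (T a b c d e).

(* [Gi] stands for the inverse of the Gram matrix [G]; keeping it separate lets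
   the annihilator be evaluated over polynomial rings. *)
Definition szabo_annihilator (K : comNzRingType) n (T : tensor5 K n)
    (Gi G : 'M[K]_n) (s : seq K) (e : K) (x : 'rV[K]_n) : 'M[K]_n :=
  (\prod_(r <- s) ((szabo_bil T x *m Gi) ^+ 2 - (e * ip G x x ^+ 3 * r ^+ 2)%:M))
    ^+ n.

Section MapRmorphism.
Variables (K L : comNzRingType) (f : {rmorphism K -> L}).

Lemma rmorph_tensor5_eval n (T : tensor5 K n) a b c d e :
  f (tensor5_eval T a b c d e) = tensor5_eval (map_tensor5 f T) (map_mx f a)
    (map_mx f b) (map_mx f c) (map_mx f d) (map_mx f e).
Proof.
rewrite /tensor5_eval rmorph_sum; apply: eq_bigr => i _.
rewrite rmorph_sum; apply: eq_bigr => j _.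
rewrite rmorph_sum; apply: eq_bigr => k _.
rewrite rmorph_sum; apply: eq_bigr => l _.
rewrite rmorph_sum; apply: eq_bigr => o _.
by rewrite !rmorphM !mxE.
Qed.

Lemma map_szabo_bil n (T : tensor5 K n) x :
  map_mx f (szabo_bil T x) = szabo_bil (map_tensor5 f T) (map_mx f x).
Proof.
by apply/matrixP => i j; rewrite !mxE rmorph_tensor5_eval !map_delta_mx.
Qed.

Lemma rmorph_ip n (G : 'M[K]_n) u v :
  f (ip G u v) = ip (map_mx f G) (map_mx f u) (map_mx f v).
Proof. by rewrite /ip map_trmx -!map_mxM [in RHS]mxE. Qed.

Lemma map_szabo_annihilator n (T : tensor5 K n) Gi G s e x :
  map_mx f (szabo_annihilator T Gi G s e x) =
  szabo_annihilator (map_tensor5 f T) (map_mx f Gi) (map_mx f G) (map f s) (f e)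
    (map_mx f x).
Proof.
rewrite /szabo_annihilator rmorphXn rmorph_prod big_map.
congr (_ ^+ _); apply: eq_bigr => r _.
rewrite /= map_mxB (rmorphXn (map_mx f : 'M_n -> 'M_n)).
rewrite [X in X ^+ 2 - _]map_mxM map_szabo_bil.
by rewrite map_scalar_mx !rmorphM ?rmorphXn rmorph_ip.
Qed.

End MapRmorphism.

Lemma cplx_mxE (R : rcfType) p q (A : 'M[R]_(p, q)) :
  cplx_mx A = map_mx (real_complex R) A.
Proof. by []. Qed.

Lemma cplx_szabo (R : rcfType) n (G : 'M[R]_n) (T : tensor5 R n) y :
  cplx_mx (szabo G T y) =
  szabo_bil (cplx_tensor T) (cplx_mx y) *m cplx_mx (invmx G).
Proof. by rewrite !cplx_mxE map_mxM map_szabo_bil. Qed.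

Lemma cplx_ip (R : rcfType) n (G : 'M[R]_n) y :
  ip (cplx_mx G) (cplx_mx y) (cplx_mx y) = (ip G y y)%:C%C.
Proof. by rewrite !cplx_mxE -rmorph_ip. Qed.

Lemma tensor5_evalZ (K : comNzRingType) n (T : tensor5 K n) a d x (c : K) :
  tensor5_eval T a (c *: x) (c *: x) d (c *: x) =
  c ^+ 3 * tensor5_eval T a x x d x.
Proof.
rewrite /tensor5_eval mulr_sumr; apply: eq_bigr => i _.
rewrite mulr_sumr; apply: eq_bigr => j _.
rewrite mulr_sumr; apply: eq_bigr => k _.
rewrite mulr_sumr; apply: eq_bigr => l _.
rewrite mulr_sumr; apply: eq_bigr => o _.
rewrite !mxE; ring.
Qed.

Lemma szaboZ (K : fieldType) n (G : 'M[K]_n) (T : tensor5 K n) (c : K) x :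
  szabo G T (c *: x) = c ^+ 3 *: szabo G T x.
Proof.
rewrite /szabo scalemxAl; congr (_ *m _).
by apply/matrixP => i j; rewrite !mxE tensor5_evalZ.
Qed.

Lemma ipZ (K : comNzRingType) n (G : 'M[K]_n) u (c : K) :
  ip G (c *: u) (c *: u) = c ^+ 2 * ip G u u.
Proof. by rewrite /ip linearZ /= -!scalemxAl -scalemxAr !mxE mulrA -expr2. Qed.

Lemma ipDZ (K : comNzRingType) n (G : 'M[K]_n) u v (t : K) :
  ip G (u + t *: v) (u + t *: v) =
  ip G u u + t * (ip G u v + ip G v u) + t ^+ 2 * ip G v v.
Proof.
rewrite /ip linearD /= linearZ /= !mulmxDl !mulmxDr -!scalemxAl -!scalemxAr.
by rewrite !mxE /=; ring.
Qed.

Lemma ip_delta (K : comNzRingType) n (G : 'M[K]_n) i j :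
  ip G (delta_mx 0 i) (delta_mx 0 j) = G i j.
Proof. by rewrite /ip trmx_delta -rowE -colE !mxE. Qed.

Lemma sym_isotropic_eq0 (R : numFieldType) n (G : 'M[R]_n) :
  G^T = G -> (forall y, ip G y y = 0) -> G = 0.
Proof.
move=> G_sym iso; apply/matrixP => i j; rewrite mxE.
have Gji : G j i = G i j by rewrite -[in LHS]G_sym mxE.
have := ipDZ G (delta_mx 0 i) (delta_mx 0 j) 1.
rewrite !iso !ip_delta Gji mulr0 mul1r add0r addr0 => /esym/eqP.
by rewrite -mulr2n mulrn_eq0 => /eqP.
Qed.

Lemma exists_unit_vector (R : rcfType) n (G : 'M[R]_n.+1) :
  G^T = G -> \det G != 0 -> exists x0, ip G x0 x0 = 1 \/ ip G x0 x0 = -1.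
Proof.
move=> G_sym G_nondeg.
have [y y_aniso] : exists y, ip G y y != 0.
  apply/not_existsP => iso.
  have G0 : G = 0 by apply: sym_isotropic_eq0 => // y; apply/eqP/negPn/negP/iso.
  by move: G_nondeg; rewrite G0 det0 eqxx.
exists ((Num.sqrt `|ip G y y|)^-1 *: y).
rewrite ipZ exprVn sqr_sqrtr ?normr_ge0 // mulrC.
have [q_lt0|q_gt0|q0] := ltrgtP (ip G y y) 0.
- by right; rewrite ltr0_norm // invrN mulrN divff // lt_eqF.
- by left; rewrite gtr0_norm // divff // gt_eqF.
- by rewrite q0 eqxx in y_aniso.
Qed.

Lemma Cayley_Hamilton_roots (C : closedFieldType) n (B : 'M[C]_n.+1) s :
  (forall z, root (char_poly B) z -> z \in s) ->
  horner_mx B ((\prod_(r <- s) ('X - r%:P)) ^+ n.+1) = 0.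
Proof.
move=> roots_in_s.
have [rs char_rs] := closed_field_poly_normal (char_poly B).
rewrite (monicP (char_poly_monic B)) scale1r in char_rs.
have size_rs : size rs = n.+1.
  by have := size_char_poly B; rewrite char_rs size_prod_XsubC => -[].
have rs_in_s z : z \in rs -> z \in s.
  by move=> z_rs; apply: roots_in_s; rewrite char_rs root_prod_XsubC.
have char_dvd : char_poly B %| (\prod_(r <- s) ('X - r%:P)) ^+ size rs.
  rewrite char_rs; elim: rs rs_in_s {char_rs size_rs} => [|z rs IH] rs_in_s.
    by rewrite big_nil dvd1p.
  rewrite big_cons exprS; apply: dvdp_mul.
    by rewrite dvdp_XsubCl root_prod_XsubC rs_in_s ?mem_head.
  by apply: IH => w w_rs; rewrite rs_in_s // inE w_rs orbT.
rewrite -size_rs; case/dvdpP: char_dvd => q ->.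
by rewrite rmorphM /= Cayley_Hamilton mulr0.
Qed.

Lemma char_roots_sqr_annihilator (C : closedFieldType) n (B : 'M[C]_n.+1) s k :
  (forall z, root (char_poly B) z -> z \in s) ->
  (\prod_(r <- s) ((k *: B) ^+ 2 - (k ^+ 2 * r ^+ 2)%:M)) ^+ n.+1 = 0.
Proof.
move=> roots_in_s.
have factor r : (k *: B) ^+ 2 - (k ^+ 2 * r ^+ 2)%:M =
    horner_mx B (('X - r%:P) * ((k ^+ 2)%:P * ('X + r%:P))).
  have -> : ('X - r%:P) * ((k ^+ 2)%:P * ('X + r%:P)) =
      (k%:P * 'X) ^+ 2 - (k ^+ 2 * r ^+ 2)%:P by rewrite polyCM; ring.
  rewrite (rmorphB (horner_mx B)) (rmorphXn (horner_mx B)).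
  by rewrite (rmorphM (horner_mx B)) /= horner_mx_X !horner_mx_C -mul_scalar_mx.
under eq_bigr do rewrite factor.
rewrite -rmorph_prod -rmorphXn big_split /= exprMn rmorphM /=.
by rewrite Cayley_Hamilton_roots // mul0r.
Qed.

Lemma poly_eq0_halfline (R : rcfType) (p : {poly R[i]}) (M : R) :
  (forall t : R, M <= t -> p.[t%:C%C] = 0) -> p = 0.
Proof.
move=> vanish; apply/eqP; apply: contraT => p_neq0.
pose rs := [seq (M + k%:R)%:C%C | k <- iota 0 (size p)].
have := @max_poly_roots _ p rs p_neq0; rewrite size_map size_iota ltnn; apply.
  by apply/allP => _ /mapP[k _ ->]; apply/rootP/vanish; rewrite lerDl ler0n.
rewrite map_inj_uniq ?iota_uniq // => k l /complexI /addrI /eqP.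
by rewrite eqr_nat => /eqP.
Qed.

Lemma szabo_annihilator_horner (K : comNzRingType) n (T : tensor5 K n)
    Gi G s e (a b : 'rV[K]_n) z :
  szabo_annihilator T Gi G s e (a + z *: b) =
  map_mx (horner_eval z) (szabo_annihilator (map_tensor5 polyC T)
    (map_mx polyC Gi) (map_mx polyC G) (map polyC s) e%:P
    (map_mx polyC a + 'X *: map_mx polyC b)).
Proof.
have evalC c : horner_eval z c%:P = c by rewrite /horner_eval hornerC.
have map_evalC p q (A : 'M_(p, q)) : map_mx (horner_eval z) (map_mx polyC A) = A.
  by apply/matrixP => i j; rewrite !mxE evalC.
have tensor_evalC : map_tensor5 (horner_eval z) (map_tensor5 polyC T) = T.
  by do 5 (apply: funext => ?); apply: evalC.
rewrite map_szabo_annihilator tensor_evalC !map_evalC -map_comp (eq_map evalC).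
rewrite map_id map_mxD map_mxZ !map_evalC.
rewrite [X in _ = szabo_annihilator _ _ _ _ X _](_ : _ = e); last exact: evalC.
by rewrite [X in _ = szabo_annihilator _ _ _ _ _ (_ + X *: _)]hornerX.
Qed.

Lemma szabo_annihilator_line_eq0 (R : rcfType) n (T : tensor5 R[i] n)
    Gi G s e (a b : 'rV[R[i]]_n) (M : R) z :
  (forall t : R, M <= t -> szabo_annihilator T Gi G s e (a + t%:C%C *: b) = 0) ->
  szabo_annihilator T Gi G s e (a + z *: b) = 0.
Proof.
move=> vanish; rewrite szabo_annihilator_horner.
set P := szabo_annihilator _ _ _ _ _ _.
suff -> : P = 0 by rewrite map_mx0.
apply/matrixP => i j; rewrite mxE; apply: (poly_eq0_halfline (M := M)) => t Mt.
by have /matrixP/(_ i j) := vanish t Mt; rewrite szabo_annihilator_horner !mxE.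
Qed.

Lemma szabo_annihilator_null (K : comNzRingType) n (T : tensor5 K n)
    Gi G s e x :
  ip G x x = 0 ->
  szabo_annihilator T Gi G s e x = (szabo_bil T x *m Gi) ^+ (2 * size s * n).
Proof.
move=> x_null; rewrite /szabo_annihilator x_null.
under eq_bigr do rewrite expr0n /= mulr0 mul0r (raddf0 (@scalar_mx _ n)) subr0.
rewrite big_const_seq count_predT iter_mulr_1.
by rewrite -!exprM mulnA.
Qed.

Lemma quadratic_gt0 (R : realFieldType) (c d t : R) :
  `|c| + `|d| + 1 <= t -> 0 < c + t * d + t ^+ 2.
Proof.
move=> t_large; have c_ge0 := normr_ge0 c; have d_ge0 := normr_ge0 d.
have c_ge := lerNnormlW (lexx `|c|); have d_ge := lerNnormlW (lexx `|d|).
have t_sq : t * (`|c| + `|d| + 1) <= t ^+ 2.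
  by rewrite expr2; apply: ler_wpM2l; lra.
have t_d : t * - d <= t * `|d| by apply: ler_wpM2l; lra.
have t_c : `|c| <= t * `|c| by rewrite -[leLHS]mul1r; apply: ler_wpM2r; lra.
nra.
Qed.

Section Annihilation.
Variables (R : realType) (n : nat) (G : 'M[R]_n.+1) (T : tensor5 R n.+1).
Variables (e : R) (x0 : 'rV[R]_n.+1) (s : seq R[i]).
Hypothesis e_sign : e = 1 \/ e = -1.
Hypothesis x0_e : ip G x0 x0 = e.
Hypothesis eigenvalues_in_s :
  forall y, ip G y y = e -> forall z, eigenvalues (szabo G T y) z -> z \in s.

Local Notation Phi :=
  (szabo_annihilator (cplx_tensor T) (cplx_mx (invmx G)) (cplx_mx G) s e%:C%C).

Lemma annihilator_eq0_pos y : 0 < e * ip G y y -> Phi (cplx_mx y) = 0.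
Proof.
set q := ip G y y => q_pos.
pose k := Num.sqrt (e * q); have k_gt0 : 0 < k by rewrite sqrtr_gt0.
pose y0 := k^-1 *: y.
have y0_e : ip G y0 y0 = e.
  rewrite ipZ exprVn sqr_sqrtr ?ltW // -/q.
  have q_neq0 : q != 0 by apply: contraTneq q_pos => ->; rewrite mulr0 ltxx.
  by case: e_sign => ->; field; rewrite ?oppr_eq0.
have y_y0 : y = k *: y0 by rewrite scalerA divff ?scale1r // gt_eqF.
have e_q3 : (e%:C * q%:C ^+ 3 = (k ^+ 3)%:C ^+ 2)%C.
  rewrite -!rmorphXn -rmorphM -exprM mulnC exprM sqr_sqrtr ?ltW //.
  by case: e_sign => ->; congr (_%:C)%C; ring.
rewrite /szabo_annihilator -cplx_szabo cplx_ip -/q {1}y_y0 szaboZ cplx_mxE.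
rewrite map_mxZ -cplx_mxE e_q3.
exact: char_roots_sqr_annihilator (eigenvalues_in_s y0_e).
Qed.

Lemma annihilator_real_eq0 y : Phi (cplx_mx y) = 0.
Proof.
set q := ip G y y; set b := ip G y x0 + ip G x0 y.
rewrite -[cplx_mx y]addr0 -(scale0r (cplx_mx x0)).
apply: (szabo_annihilator_line_eq0 (M := `|e * q| + `|e * b| + 1)) => t t_large.
rewrite !cplx_mxE -map_mxZ -map_mxD -cplx_mxE.
apply: annihilator_eq0_pos; rewrite ipDZ x0_e -/q -/b.
suff -> : e * (q + t * b + t ^+ 2 * e) = e * q + t * (e * b) + t ^+ 2.
  exact: quadratic_gt0.
by case: e_sign => ->; ring.
Qed.

Lemma annihilator_eq0 x : Phi x = 0.
Proof.
pose u := map_mx (@complex.Re R) x; pose v := map_mx (@complex.Im R) x.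
have -> : x = cplx_mx u + 'i%C *: cplx_mx v.
  by apply/matrixP => i j; rewrite !mxE [LHS]complexE mulrC.
apply: (szabo_annihilator_line_eq0 (M := 0)) => t _.
rewrite !cplx_mxE -map_mxZ -map_mxD -cplx_mxE.
exact: annihilator_real_eq0.
Qed.

End Annihilation.

Theorem theorem1p5 (R : realType) (m : nat) (G : 'M[R]_m) (T : tensor5 R m) :
  (3 <= m)%N ->
  G^T = G -> \det G != 0 ->
  is_cov_deriv_act T ->
  (forall x y : 'rV[R]_m, ip G x x = 1 -> ip G y y = 1 ->
     eigenvalues (szabo G T x) =1 eigenvalues (szabo G T y)) ->
  (forall x y : 'rV[R]_m, ip G x x = -1 -> ip G y y = -1 ->
     eigenvalues (szabo G T x) =1 eigenvalues (szabo G T y)) ->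
  forall x : 'rV[R[i]]_m, ip (cplx_mx G) x x = 0 ->
    nilpotent_mx (szabo (cplx_mx G) (cplx_tensor T) x).
Proof.
case: m G T => [//|n] G T _ G_sym G_nondeg _ eig_pos eig_neg x x_null.
have [x0 x0_unit] := exists_unit_vector G_sym G_nondeg.
have [s char_s] := closed_field_poly_normal (char_poly (cplx_mx (szabo G T x0))).
rewrite (monicP (char_poly_monic _)) scale1r in char_s.
have eigenvalues_in_s y : ip G y y = ip G x0 x0 ->
    forall z, eigenvalues (szabo G T y) z -> z \in s.
  move=> y_x0 z; rewrite [eigenvalues _ z](_ : _ = eigenvalues (szabo G T x0) z).
    by rewrite /eigenvalues char_s root_prod_XsubC.
  by case: x0_unit => x0_e; rewrite x0_e in y_x0; [apply: eig_pos|apply: eig_neg].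
exists (2 * size s * n.+1)%N.
rewrite /szabo -[invmx _]map_invmx -cplx_mxE.
rewrite -(szabo_annihilator_null _ _ s (ip G x0 x0)%:C%C x_null).
exact: (annihilator_eq0 x0_unit (erefl _) eigenvalues_in_s x).
Qed.
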